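(* Let $H$ and $J$ be atomic hypergraphs on the same finite carrier $C$. Then $H$ and $J$ are cognate if and only if $H$ and $J$ have exactly the same constructions, i.e. $\mathcal C(H)=\mathcal C(J)$.
   Context: A hypergraph is a finite set $H$ of nonempty subsets of some finite set; its carrier is $\bigcup H$. For a family $F$ and a set $Y$, $F_Y=\{X\in F\mid X\subseteq Y\}$. A hypergraph partition of $H$ is a partition $\{H_1,\dots,H_n\}$ ($n\ge0$) of the set $H$ such that $\{\bigcup H_1,\dots,\bigcup H_n\}$ is a partition of $\bigcup H$; $H$ is connected if it has exactly one hypergraph partition; the finest hypergraph partition is the unique one with all blocks connected. $H$ is atomic if $\{x\}\in H$ for every $x\in\bigcup H$. Constructions of an atomic hypergraph $H$ are defined by induction on $|\bigcup H|$: (0) $\emptyset$ is the only construction of the empty hypergraph; (1) if $|\bigcup H|\ge1$, $H$ is connected, $x\in\bigcup H$ and $K$ is a construction of $H_{\bigcup H\setminus\{x\}}$, then $K\cup\{\bigcup H\}$ is a construction of $H$; (2) if $H$ is not connected with finest hypergraph partition $\{H_1,\dots,H_n\}$, $n\ge2$, and $K_i$ is a construction of $H_i$ for each $i$, then $K_1\cup\dots\cup K_n$ is a construction of $H$. $\mathcal C(H)$ denotes the set of constructions. $Y\subseteq\bigcup H$ is dispensable in $H$ when $H_Y\setminus\{Y\}$ is a connected hypergraph with carrier $Y$; $H\cup\{Y\}$ enhances $H$ when $Y$ is dispensable in $H$ and $Y\notin H$; two hypergraphs on the same carrier are cognate when related by the reflexive, symmetric, transitive closure of enhancement. *)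

From mathcomp Require Import all_boot.
From Stdlib Require Import Relations.Relation_Operators.
Set Implicit Arguments. Unset Strict Implicit. Unset Printing Implicit Defensive.

Section Hyper.
Variable T : finType.

Definition hypergraph (H : {set {set T}}) : Prop := set0 \notin H.

Definition carrier (H : {set {set T}}) : {set T} := \bigcup_(X in H) X.

Definition restrict (F : {set {set T}}) (Y : {set T}) : {set {set T}} :=
  [set X in F | X \subset Y].

Definition hpartition (H : {set {set T}}) (P : {set {set {set T}}}) : Prop :=
  partition P H /\
  (forall B1 B2, B1 \in P -> B2 \in P -> B1 != B2 -> [disjoint carrier B1 & carrier B2]) /\
  (forall B, B \in P -> carrier B != set0) /\
  \bigcup_(B in P) carrier B = carrier H.

Definition connected (H : {set {set T}}) : Prop :=
  exists P, hpartition H P /\ forall Q, hpartition H Q -> Q = P.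

Definition finest_hpartition (H : {set {set T}}) (P : {set {set {set T}}}) : Prop :=
  hpartition H P /\ forall B, B \in P -> connected B.

Definition atomic (H : {set {set T}}) : Prop :=
  forall x, x \in carrier H -> [set x] \in H.

Inductive construction : {set {set T}} -> {set {set T}} -> Prop :=
| constr_empty : construction set0 set0
| constr_conn (H K : {set {set T}}) (x : T) :
    0 < #|carrier H| -> connected H -> x \in carrier H ->
    construction (restrict H (carrier H :\ x)) K ->
    construction H (K :|: [set carrier H])
| constr_disc (H : {set {set T}}) (P : {set {set {set T}}})
    (Ks : {set {set T}} -> {set {set T}}) :
    ~ connected H -> finest_hpartition H P -> 2 <= #|P| ->
    (forall B, B \in P -> construction B (Ks B)) ->
    construction H (\bigcup_(B in P) Ks B).

Definition dispensable (H : {set {set T}}) (Y : {set T}) : Prop :=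
  Y \subset carrier H /\
  connected (restrict H Y :\ Y) /\ carrier (restrict H Y :\ Y) = Y.

(* enhances J H : J = H u {Y} enhances H  (Y nonempty, so J is again a hypergraph) *)
Definition enhances (J H : {set {set T}}) : Prop :=
  exists Y : {set T}, Y != set0 /\ dispensable H Y /\ Y \notin H /\ J = H :|: [set Y].

Definition cognate (H J : {set {set T}}) : Prop :=
  clos_refl_sym_trans _ enhances H J.

End Hyper.

From mathcomp Require Import all_boot.
From Stdlib Require Import Relations.Relation_Operators.
From Stdlib Require Import Classical ClassicalEpsilon IndefiniteDescription.
Set Implicit Arguments. Unset Strict Implicit. Unset Printing Implicit Defensive.

(* Both properties are governed by which restrictions H_X are connected.
   Adding a dispensable set Y, the carrier of the connected H_Y, never changes
   whether a restriction can be split, so cognate hypergraphs have the same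
   connected restrictions; constructions of an atomic hypergraph only depend on
   these (the finest partition of J is read off from that of H), so cognate
   hypergraphs have the same constructions.  Conversely, the sets occurring in
   the constructions of an atomic H are exactly its saturated sets, the
   nonempty X with H_X connected, and H is cognate to its saturation, reached
   by adding saturated sets one at a time as enhancements.  Equal constructions
   thus give equal saturations, through which H and J are cognate. *)

Lemma choice_in (U V : Type) (A : U -> Prop) (R : U -> V -> Prop) (v0 : V) :
  (forall u, A u -> exists v, R u v) -> exists f, forall u, A u -> R u (f u).
Proof.
move=> ex; have total u : exists v, A u -> R u v.
  by case: (classic (A u)) => [/ex [v Rv]|nAu]; [exists v|exists v0].
by have [f fR] := functional_choice _ total; exists f.
Qed.

Section Hypergraphs.
Variable T : finType.
Implicit Types (H J F G S U B : {set {set T}}) (X Y e A : {set T}) (P Q : {set {set {set T}}}).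

Lemma carrierP F x : reflect (exists2 e, e \in F & x \in e) (x \in carrier F).
Proof. exact: bigcupP. Qed.

Lemma sub_carrier F e : e \in F -> e \subset carrier F.
Proof. exact: bigcup_sup. Qed.

Lemma carrierS F G : F \subset G -> carrier F \subset carrier G.
Proof.
move=> FG; apply/subsetP=> x /carrierP [e eF xe]; apply/carrierP.
by exists e; rewrite ?(subsetP FG).
Qed.

Lemma carrierU F G : carrier (F :|: G) = carrier F :|: carrier G.
Proof. exact: bigcup_setU. Qed.

Lemma carrier_set1 X : carrier [set X] = X.
Proof. exact: big_set1. Qed.

Lemma carrier_set0 : carrier (set0 : {set {set T}}) = set0.
Proof. exact: big_set0. Qed.

Lemma edge_neq0 F e : hypergraph F -> e \in F -> e != set0.
Proof. by move=> hF eF; apply: contraNneq hF => <-. Qed.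

Lemma carrier_eq0 F : hypergraph F -> (carrier F == set0) = (F == set0).
Proof.
move=> hF; apply/idP/idP => [/eqP c0|/eqP->]; last by rewrite carrier_set0.
apply/set0Pn => -[e eF]; have /set0Pn [x xe] := edge_neq0 hF eF.
by have := sub_carrier eF; rewrite c0 subset0 => /eqP e0; rewrite e0 inE in xe.
Qed.

Lemma hypergraphS F G : hypergraph F -> G \subset F -> hypergraph G.
Proof. by move=> hF GF; apply: contra hF; apply: (subsetP GF). Qed.

Lemma hypergraphU1 F Y : hypergraph F -> Y != set0 -> hypergraph (F :|: [set Y]).
Proof. by move=> hF Yn; rewrite /hypergraph !inE negb_or hF eq_sym Yn. Qed.

Lemma restrict_sub F Y : restrict F Y \subset F.
Proof. by apply/subsetP=> X; rewrite inE => /andP[]. Qed.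

Lemma hypergraph_restrict F A : hypergraph F -> hypergraph (restrict F A).
Proof. by move=> hF; apply: hypergraphS hF (restrict_sub _ _). Qed.

Lemma carrier_restrict_sub F Y : carrier (restrict F Y) \subset Y.
Proof. by apply/bigcupsP=> e; rewrite inE => /andP[]. Qed.

Lemma restrict_carrier F : restrict F (carrier F) = F.
Proof. by apply/setP=> e; rewrite inE andb_idr // => /sub_carrier. Qed.

Lemma restrict_restrict F A X : restrict (restrict F A) X = restrict F (A :&: X).
Proof. by apply/setP=> e; rewrite !inE subsetI andbA. Qed.

Lemma restrict_restrict_sub F A X : X \subset A -> restrict (restrict F A) X = restrict F X.
Proof. by move=> XA; rewrite restrict_restrict (setIidPr XA). Qed.

Lemma carrier_restrict F A : atomic F -> carrier (restrict F A) = carrier F :&: A.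
Proof.
move=> aF; apply/setP=> x; rewrite inE; apply/idP/andP => [xR|[xF xA]].
  by rewrite (subsetP (carrierS (restrict_sub F A))) ?(subsetP (carrier_restrict_sub F A)).
by apply/carrierP; exists [set x]; rewrite ?set11 // inE aF // sub1set.
Qed.

Lemma carrier_restrict_subset F A : atomic F -> A \subset carrier F ->
  carrier (restrict F A) = A.
Proof. by move=> aF AF; rewrite carrier_restrict // (setIidPr AF). Qed.

Lemma atomic_restrict F A : atomic F -> atomic (restrict F A).
Proof.
move=> aF x; rewrite carrier_restrict // inE => /andP [xF xA].
by rewrite inE aF // sub1set.
Qed.

(** * Hypergraph partitions *)

Lemma hpartitionP H P : hypergraph H -> hpartition H P <->
  [/\ forall B, B \in P -> B \subset H,
      forall e, e \in H -> exists2 B, B \in P & e \in B,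
      forall B1 B2, B1 \in P -> B2 \in P -> B1 != B2 ->
        [disjoint carrier B1 & carrier B2]
    & set0 \notin P].
Proof.
move=> hH; split.
  case=> /and3P [/eqP cov _ n0] [dis _]; rewrite -cov; split=> //.
  - by move=> B BP; apply: bigcup_sup.
  - by move=> e /bigcupP [B]; exists B.
case=> sub cov dis n0.
have coverE : cover P = H.
  apply/eqP; rewrite eqEsubset; apply/andP; split; first exact/bigcupsP.
  by apply/subsetP=> e /cov [B BP eB]; apply/bigcupP; exists B.
split.
  apply/and3P; split; rewrite ?coverE //.
  apply/trivIsetP=> B1 B2 B1P B2P ne; rewrite -setI_eq0; apply/set0Pn => -[e].
  rewrite inE => /andP [e1 e2].
  have /set0Pn [x xe] := edge_neq0 hH (subsetP (sub B1 B1P) e e1).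
  have x1 : x \in carrier B1 by apply/carrierP; exists e.
  have x2 : x \in carrier B2 by apply/carrierP; exists e.
  by rewrite (disjointFr (dis _ _ B1P B2P ne) x1) in x2.
split=> //; split.
  move=> B BP; have /set0Pn [e eB] : B != set0 by apply: contraNneq n0 => <-.
  have /set0Pn [x xe] := edge_neq0 hH (subsetP (sub B BP) e eB).
  by apply/set0Pn; exists x; apply/carrierP; exists e.
rewrite -coverE; apply/setP=> x; apply/bigcupP/carrierP.
  by case=> B BP /carrierP [e eB xe]; exists e => //; apply/bigcupP; exists B.
by case=> e /bigcupP [B BP eB] xe; exists B => //; apply/carrierP; exists e.
Qed.

Section Partition.
Variables (H : {set {set T}}) (P : {set {set {set T}}}).
Hypothesis hP : hpartition H P.

Lemma block_sub B : B \in P -> B \subset H.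
Proof. by case: hP => /and3P [/eqP <- _ _] _; apply: bigcup_sup. Qed.

Lemma block_cover e : e \in H -> exists2 B, B \in P & e \in B.
Proof. by case: hP => /and3P [/eqP <- _ _] _ /bigcupP [B]; exists B. Qed.

Lemma block_carrier x : x \in carrier H -> exists2 B, B \in P & x \in carrier B.
Proof. by case: hP => _ [_ [_ <-]] /bigcupP [B]; exists B. Qed.

Lemma set0_notin_blocks : set0 \notin P.
Proof. by case: hP => /and3P []. Qed.

Lemma block_eq B1 B2 x : B1 \in P -> B2 \in P ->
  x \in carrier B1 -> x \in carrier B2 -> B1 = B2.
Proof.
move=> B1P B2P x1 x2; apply/eqP; apply: contraT => ne; case: hP => _ [dis _].
by rewrite (disjointFr (dis _ _ B1P B2P ne) x1) in x2.
Qed.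

Lemma block_eq_edge B1 B2 e : hypergraph H -> B1 \in P -> B2 \in P ->
  e \in B1 -> e \in B2 -> B1 = B2.
Proof.
move=> hH B1P B2P e1 e2.
have /set0Pn [x xe] := edge_neq0 hH (subsetP (block_sub B1P) e e1).
by apply: (block_eq (x := x)) => //; apply/carrierP; exists e.
Qed.

Lemma restrict_block B X : hypergraph H -> B \in P -> X \subset carrier B ->
  restrict B X = restrict H X.
Proof.
move=> hH BP XB; apply/setP=> e; rewrite !inE; case eX: (e \subset X); rewrite ?andbF //.
rewrite !andbT; apply/idP/idP => [|eH]; first exact: (subsetP (block_sub BP)).
have [B' B'P eB'] := block_cover eH.
have /set0Pn [x xe] := edge_neq0 hH eH.
suff -> : B = B' by [].
apply: (block_eq (x := x)) => //; first exact: (subsetP XB) (subsetP eX _ xe).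
by apply/carrierP; exists e.
Qed.

Lemma blockE B : hypergraph H -> B \in P -> B = restrict H (carrier B).
Proof. by move=> hH BP; rewrite -(restrict_block hH BP (subxx _)) restrict_carrier. Qed.

Lemma hypergraph_block B : hypergraph H -> B \in P -> hypergraph B.
Proof. by move=> hH BP; apply: hypergraphS hH (block_sub BP). Qed.

Lemma atomic_block B : atomic H -> B \in P -> atomic B.
Proof.
move=> aH BP x xB.
have [B' B'P xB'] := block_cover (aH x (subsetP (carrierS (block_sub BP)) x xB)).
suff -> : B = B' by [].
by apply: (block_eq (x := x)) => //; apply/carrierP; exists [set x]; rewrite ?set11.
Qed.

Lemma carrier_block_lt B B' : B \in P -> B' \in P -> B != B' ->
  #|carrier B| < #|carrier H|.
Proof.
move=> BP B'P ne; apply/proper_card/properP; split; first exact/carrierS/block_sub.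
case: hP => _ [dis [nz _]]; have /set0Pn [x xB'] := nz _ B'P.
exists x; first exact: (subsetP (carrierS (block_sub B'P))).
exact/negbT/(disjointFl (dis _ _ BP B'P ne)).
Qed.

End Partition.

Lemma hpartition_set0 : hpartition (set0 : {set {set T}}) set0.
Proof.
apply/hpartitionP; first by rewrite /hypergraph inE.
by split=> [B|e|B1 B2|]; rewrite ?inE.
Qed.

Lemma hpartition_set1 F : hypergraph F -> F != set0 -> hpartition F [set F].
Proof.
move=> hF Fn0; apply/hpartitionP => //; split.
- by move=> B /set1P ->.
- by move=> e eF; exists F; rewrite ?set11.
- by move=> B1 B2 /set1P -> /set1P ->; rewrite eqxx.
- by rewrite inE eq_sym.
Qed.

Lemma hpartition_set2 F S G : hypergraph F -> S :|: G = F ->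
  [disjoint carrier S & carrier G] -> S != set0 -> G != set0 ->
  hpartition F [set S; G].
Proof.
move=> hF SG dis Sn Gn; apply/hpartitionP => //; rewrite -SG; split.
- by move=> B /set2P [] ->; rewrite ?subsetUl ?subsetUr.
- by move=> e /setUP [] eX; [exists S|exists G]; rewrite ?inE ?eqxx ?orbT.
- move=> B1 B2 /set2P [] -> /set2P [] ->; rewrite ?eqxx // => _.
  by rewrite disjoint_sym.
- by rewrite !inE !(eq_sym set0) negb_or Sn Gn.
Qed.

(** * Connectivity *)

Definition unsplittable F := forall S G, S :|: G = F ->
  [disjoint carrier S & carrier G] -> S = set0 \/ G = set0.

Lemma connected_unsplittable F : hypergraph F -> connected F -> unsplittable F.
Proof.
move=> hF [P0 [_ uniqP]] S G SG dis.
have [->|Sn0] := eqVneq S set0; first by left.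
have [->|Gn0] := eqVneq G set0; first by right.
have Fn0 : F != set0 by apply: contraNneq Sn0 => F0; rewrite -subset0 -F0 -SG subsetUl.
have P12 : [set F] = [set S; G].
  by rewrite (uniqP _ (hpartition_set1 hF Fn0)) (uniqP _ (hpartition_set2 hF SG dis Sn0 Gn0)).
have /set1P SF : S \in [set F] by rewrite P12 set21.
have /set1P GF : G \in [set F] by rewrite P12 set22.
move: dis; rewrite SF GF -setI_eq0 setIid carrier_eq0 // => F0.
by rewrite F0 in Fn0.
Qed.

Lemma unsplittable_connected F : hypergraph F -> unsplittable F -> connected F.
Proof.
move=> hF ns; have [F0|Fn0] := eqVneq F set0.
  exists set0; split; first by rewrite F0; exact: hpartition_set0.
  move=> Q hQ; apply/setP=> B; rewrite inE; apply/negbTE/negP => BQ.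
  move: (set0_notin_blocks hQ); have := block_sub hQ BQ.
  by rewrite F0 subset0 => /eqP <-; rewrite BQ.
exists [set F]; split=> [|Q hQ]; first exact: hpartition_set1.
have blockF B : B \in Q -> B = F.
  move=> BQ; have BF := block_sub hQ BQ.
  have dis : [disjoint carrier B & carrier (F :\: B)].
    apply/pred0P=> x /=; apply/negbTE/andP => -[xB /carrierP [e]].
    rewrite inE => /andP [eB eF] xe; have [B' B'Q eB'] := block_cover hQ eF.
    have xB' : x \in carrier B' by apply/carrierP; exists e.
    by move: eB; rewrite (block_eq hQ BQ B'Q xB xB') eB'.
  have splitF : B :|: (F :\: B) = F by rewrite -{1}(setIidPr BF) setID.
  case: (ns _ _ splitF dis) => [B0|/eqP].
    by move: (set0_notin_blocks hQ); rewrite -B0 BQ.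
  by rewrite setD_eq0 => FB; apply/eqP; rewrite eqEsubset BF.
have /set0Pn [e eF] := Fn0; have [B' B'Q _] := block_cover hQ eF.
apply/setP=> B; rewrite inE; apply/idP/eqP => [/blockF //|->].
by rewrite -(blockF _ B'Q).
Qed.

Lemma connectedP F : hypergraph F -> connected F <-> unsplittable F.
Proof. by move=> hF; split; [apply: connected_unsplittable | apply: unsplittable_connected]. Qed.

Lemma disconnected_split F : hypergraph F -> ~ connected F ->
  exists S G, [/\ S :|: G = F, [disjoint carrier S & carrier G], S != set0 & G != set0].
Proof.
move=> hF nc; apply: NNPP => nsplit; apply/nc/unsplittable_connected => // S G SG dis.
have [->|Sn] := eqVneq S set0; first by left.
have [->|Gn] := eqVneq G set0; first by right.
by case: nsplit; exists S, G.
Qed.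

Lemma disjoint_carrier_sub S G : hypergraph G ->
  [disjoint carrier S & carrier G] -> carrier G \subset carrier S -> G = set0.
Proof. by move=> hG dis GS; apply/eqP; rewrite -carrier_eq0 // -(setIidPr GS) setI_eq0. Qed.

Lemma connected_restrict_edge F e : hypergraph F -> e \in F -> connected (restrict F e).
Proof.
move=> hF eF; apply/connectedP; first exact: hypergraph_restrict.
move=> S G SG dis.
have hSG : hypergraph (S :|: G) by rewrite SG; apply: hypergraph_restrict.
have /andP [cS cG] : (carrier S \subset e) && (carrier G \subset e).
  by rewrite -subUset -carrierU SG carrier_restrict_sub.
have : e \in S :|: G by rewrite SG inE eF subxx.
case/setUP => eX; [right|left].
- apply: (disjoint_carrier_sub (hypergraphS hSG (subsetUr _ _)) dis).
  exact: subset_trans cG (sub_carrier eX).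
- rewrite disjoint_sym in dis.
  apply: (disjoint_carrier_sub (hypergraphS hSG (subsetUl _ _)) dis).
  exact: subset_trans cS (sub_carrier eX).
Qed.

Lemma connected_in_block H P X : hypergraph H -> atomic H -> hpartition H P ->
  X \subset carrier H -> X != set0 -> connected (restrict H X) ->
  exists2 B, B \in P & X \subset carrier B.
Proof.
move=> hH aH hP XH /set0Pn [x xX] cX.
have [B BP xB] := block_carrier hP (subsetP XH x xX); exists B => //.
have splitX : restrict B X :|: (restrict H X :\: B) = restrict H X.
  apply/setP=> e; rewrite !inE; case eB: (e \in B); rewrite //= orbF.
  by rewrite (subsetP (block_sub hP BP)).
have dis : [disjoint carrier (restrict B X) & carrier (restrict H X :\: B)].
  apply/pred0P=> y /=; apply/negbTE/andP => -[yR /carrierP [f]].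
  rewrite !inE => /and3P [fB fH _] yf.
  have yB : y \in carrier B := subsetP (carrierS (restrict_sub B X)) y yR.
  have [B' B'P fB'] := block_cover hP fH.
  have yB' : y \in carrier B' by apply/carrierP; exists f.
  by move: fB; rewrite (block_eq hP BP B'P yB yB') fB'.
have [|R0] := connected_unsplittable (hypergraph_restrict _ hH) cX splitX dis.
  move=> /setP /(_ [set x]); rewrite !inE sub1set xX andbT.
  by rewrite (atomic_block hP aH BP xB).
rewrite -(carrier_restrict_subset aH XH) -splitX R0 setU0.
exact/carrierS/restrict_sub.
Qed.

Section Refinement.
Variables (H B S G : {set {set T}}) (P : {set {set {set T}}}).
Hypotheses (hH : hypergraph H) (hP : hpartition H P) (BP : B \in P).
Hypotheses (SG : S :|: G = B) (dis : [disjoint carrier S & carrier G]).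
Hypotheses (Sn0 : S != set0) (Gn0 : G != set0).

Let SB : S \subset B. Proof. by rewrite -SG subsetUl. Qed.
Let GB : G \subset B. Proof. by rewrite -SG subsetUr. Qed.
Let hB : hypergraph B. Proof. exact: (hypergraph_block hP hH BP). Qed.

Let S_neq_G : S != G.
Proof.
apply: contra_neq Gn0 => eqSG.
by apply: (disjoint_carrier_sub (hypergraphS hB GB) dis); rewrite eqSG.
Qed.

Let proper_notin (C : {set {set T}}) : C \subset B -> C != set0 -> C != B -> C \notin P.
Proof.
move=> CB /set0Pn [e eC]; apply: contra_neqN => CP.
exact: (block_eq_edge hP hH CP BP eC (subsetP CB e eC)).
Qed.

Let S_notin : S \notin P.
Proof.
apply: proper_notin SB Sn0 _; apply: contra_neq Gn0 => eqSB.
by apply: (disjoint_carrier_sub (hypergraphS hB GB) dis); rewrite eqSB carrierS.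
Qed.

Let G_notin : G \notin P.
Proof.
apply: proper_notin GB Gn0 _; apply: contra_neq Sn0 => eqGB.
have disGS : [disjoint carrier G & carrier S] by rewrite disjoint_sym.
by apply: (disjoint_carrier_sub (hypergraphS hB SB) disGS); rewrite eqGB carrierS.
Qed.

Lemma hpartition_refine : hpartition H ((P :\ B) :|: [set S; G]).
Proof.
have [sub cov disP n0] := (hpartitionP P hH).1 hP.
have cS : carrier S \subset carrier B := carrierS SB.
have cG : carrier G \subset carrier B := carrierS GB.
apply/hpartitionP => //; split.
- move=> C; rewrite !inE => /orP [/andP [_ CP] | /orP [] /eqP ->]; first exact: sub.
  + exact: subset_trans SB (sub _ BP).
  + exact: subset_trans GB (sub _ BP).
- move=> e eH; have [B0 B0P eB0] := cov e eH.
  have [E|ne] := eqVneq B0 B; last by exists B0; rewrite // !inE ne B0P.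
  by move: eB0; rewrite E -SG => /setUP [] ex; [exists S | exists G];
    rewrite // !inE eqxx ?orbT.
- move=> B1 B2; rewrite !inE.
  move=> /orP [/andP [n1 P1] | /orP [] /eqP ->] /orP [/andP [n2 P2] | /orP [] /eqP ->] ne;
    rewrite ?eqxx // ?(disjoint_sym (carrier G)) //; try by rewrite eqxx in ne.
  + exact: disP.
  + exact: disjointWr cS (disP _ _ P1 BP n1).
  + exact: disjointWr cG (disP _ _ P1 BP n1).
  + by apply: disjointWl cS (disP _ _ BP P2 _); rewrite eq_sym.
  + by apply: disjointWr cG (disP _ _ P2 BP _).
- by rewrite !inE !negb_or !(eq_sym set0) Sn0 Gn0 /= andbC negb_and n0 orbT.
Qed.

Lemma card_refine : #|P| < #|(P :\ B) :|: [set S; G]|.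
Proof.
have -> : (P :\ B) :|: [set S; G] = [set S; G] :|: (P :\ B) by rewrite setUC.
rewrite cardsU.
have -> : [set S; G] :&: (P :\ B) = set0.
  apply/setP=> C; rewrite !inE; case: eqP => [->|_]; first by rewrite (negbTE S_notin) andbF.
  by case: eqP => [->|//]; rewrite (negbTE G_notin) andbF.
rewrite cards0 subn0.
by rewrite cards2 S_neq_G (cardsD1 B P) BP.
Qed.

End Refinement.

Lemma finest_hpartition_exists H : hypergraph H -> exists P, finest_hpartition H P.
Proof.
move=> hH; have [P0 hP0] : exists P, hpartition H P.
  have [->|Hn0] := eqVneq H set0; last by exists [set H]; apply: hpartition_set1.
  by exists set0; apply: hpartition_set0.
pose N := #|{set {set T}}|.
suff refine_from n P : N - #|P| < n -> hpartition H P -> exists Q, finest_hpartition H Q.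
  exact: refine_from _ P0 (ltnSn _) hP0.
elim: n P => [//|n IH] P lt hP.
have [allc|/not_all_ex_not [B]] := classic (forall B, B \in P -> connected B).
  by exists P.
move=> nB; have [BP nc] := imply_to_and _ _ nB.
have [S [G [SG dis Sn0 Gn0]]] := disconnected_split (hypergraph_block hP hH BP) nc.
apply: (IH _ _ (hpartition_refine hH hP BP SG dis Sn0 Gn0)).
have ltP := card_refine hH hP BP SG dis Sn0 Gn0.
have ltN : #|P| < N := leq_trans ltP (max_card _).
by rewrite ltnS in lt; apply: leq_trans lt; apply: ltn_sub2l.
Qed.

Lemma connected_set0 : connected (set0 : {set {set T}}).
Proof.
apply/unsplittable_connected; first by rewrite /hypergraph inE.
by move=> S G /eqP; rewrite setU_eq0 => /andP [/eqP -> _]; left.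
Qed.

Lemma finest_two_blocks H P : hypergraph H -> ~ connected H ->
  finest_hpartition H P -> 1 < #|P|.
Proof.
move=> hH nc [hP allc]; rewrite ltnNge; apply/negP => le1; apply: nc.
have coverH : cover P = H by case: hP => /and3P [/eqP].
move: le1; rewrite leq_eqVlt ltnS leqn0 => /orP [/cards1P [B PB]|/eqP/cards0_eq P0].
  by rewrite -coverH PB /cover big_set1; apply: allc; rewrite PB set11.
by rewrite -coverH P0 /cover big_set0; apply: connected_set0.
Qed.

(** * Transfer of constructions *)

Definition conn_equiv H J := forall X, connected (restrict H X) <-> connected (restrict J X).

Lemma conn_equiv_sym H J : conn_equiv H J -> conn_equiv J H.
Proof. by move=> E X; apply: iff_sym. Qed.

Lemma conn_equiv_trans H J G : conn_equiv H J -> conn_equiv J G -> conn_equiv H G.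
Proof. by move=> E1 E2 X; apply: iff_trans (E1 X) (E2 X). Qed.

Lemma conn_equiv_restrict H J A : conn_equiv H J -> conn_equiv (restrict H A) (restrict J A).
Proof. by move=> E X; rewrite !restrict_restrict. Qed.

Lemma conn_equiv_connected H J : carrier H = carrier J -> conn_equiv H J ->
  connected H <-> connected J.
Proof. by move=> CHJ /(_ (carrier H)); rewrite {2}CHJ !restrict_carrier. Qed.

Section FinestTransfer.
Variables (H J : {set {set T}}) (P : {set {set {set T}}}).
Hypotheses (hH : hypergraph H) (hJ : hypergraph J) (aH : atomic H) (aJ : atomic J).
Hypotheses (CHJ : carrier H = carrier J) (E : conn_equiv H J).
Hypothesis (fP : finest_hpartition H P).

Let hP : hpartition H P. Proof. by case: fP. Qed.

Definition transfer_block B := restrict J (carrier B).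

Lemma carrier_transfer_block B : B \in P -> carrier (transfer_block B) = carrier B.
Proof.
by move=> BP; rewrite carrier_restrict_subset // -CHJ; apply/carrierS/(block_sub hP).
Qed.

Lemma restrict_transfer_block B : B \in P -> restrict H (carrier (transfer_block B)) = B.
Proof. by move=> BP; rewrite carrier_transfer_block // -(blockE hP hH BP). Qed.

Lemma transfer_block_inj : {in P &, injective transfer_block}.
Proof.
move=> B1 B2 B1P B2P eqB.
by rewrite -(restrict_transfer_block B1P) -(restrict_transfer_block B2P) eqB.
Qed.

Lemma conn_equiv_transfer_block B : B \in P -> conn_equiv B (transfer_block B).
Proof. by move=> BP X; rewrite /transfer_block {1}(blockE hP hH BP) !restrict_restrict. Qed.

Lemma finest_hpartition_transfer : finest_hpartition J (transfer_block @: P).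
Proof.
have [sub cov dis n0] := (hpartitionP P hH).1 hP.
split; last first.
  move=> _ /imsetP [B BP ->]; apply/E; rewrite -(blockE hP hH BP).
  by case: fP => _; apply.
apply/hpartitionP => //; split.
- by move=> _ /imsetP [B BP ->]; apply: restrict_sub.
- move=> e eJ; have eH : e \subset carrier H by rewrite CHJ sub_carrier.
  have [|B BP eB] := connected_in_block hH aH hP eH (edge_neq0 hJ eJ).
    by apply/E; apply: connected_restrict_edge.
  by exists (transfer_block B); rewrite ?imset_f // inE eJ.
- move=> _ _ /imsetP [B1 B1P ->] /imsetP [B2 B2P ->] ne.
  by rewrite !carrier_transfer_block //; apply: dis => //; apply: contraNneq ne => ->.
- apply/imsetP => -[B BP B0]; case: hP => _ [_ [nz _]].
  by move: (nz _ BP); rewrite -carrier_transfer_block // -B0 carrier_set0 eqxx.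
Qed.

End FinestTransfer.

Lemma construction_transfer H J K : construction H K ->
  hypergraph H -> hypergraph J -> atomic H -> atomic J ->
  carrier H = carrier J -> conn_equiv H J -> construction J K.
Proof.
move=> cK; elim: cK J => {H K} [|H K x pos cH xH _ IH|H P Ks nc fP two _ IH]
  J hH hJ aH aJ CHJ E.
- have /eqP -> : J == set0 by rewrite -carrier_eq0 // -CHJ carrier_set0.
  exact: constr_empty.
- have cJ : connected J by apply/(conn_equiv_connected CHJ E).
  rewrite CHJ in pos xH *; apply: (constr_conn (x := x)) => //; apply: IH.
  + exact: hypergraph_restrict.
  + exact: hypergraph_restrict.
  + exact: atomic_restrict.
  + exact: atomic_restrict.
  + by rewrite !carrier_restrict // CHJ.
  + by rewrite -CHJ; apply: conn_equiv_restrict.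
- have hP : hpartition H P by case: fP.
  have inj := transfer_block_inj hH aJ CHJ fP.
  have resE := restrict_transfer_block hH aJ CHJ fP.
  have -> : \bigcup_(B in P) Ks B =
      \bigcup_(B' in transfer_block J @: P) Ks (restrict H (carrier B')).
    by rewrite big_imset //; apply: eq_bigr => B BP; rewrite resE.
  apply: constr_disc.
  + by move/(conn_equiv_connected CHJ E).
  + exact: (finest_hpartition_transfer hH hJ aH aJ CHJ E fP).
  + by rewrite card_in_imset.
  + move=> _ /imsetP [B BP ->]; rewrite resE //; apply: IH => //.
    * exact: (hypergraph_block hP hH BP).
    * exact: hypergraph_restrict.
    * exact: (atomic_block hP aH BP).
    * exact: atomic_restrict.
    * by rewrite (carrier_transfer_block aJ CHJ fP).
    * exact: (conn_equiv_transfer_block hH E fP).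
Qed.

(** * Enhancements *)

Section AddCarrierEdge.
Variables (F G : {set {set T}}) (Y : {set T}).
Hypotheses (Yn0 : Y != set0) (GF : G \subset F) (cG : carrier G = Y).

Lemma unsplittableU1_side S U : unsplittable F -> S :|: U = F :|: [set Y] ->
  [disjoint carrier S & carrier U] -> Y \in S -> U = set0.
Proof.
move=> ns SU dis YS; have /set0Pn [y yY] := Yn0.
have yS : y \in carrier S by apply/carrierP; exists Y.
have YU : Y \notin U.
  by apply: contraL yS => YU; rewrite (disjointFl dis) //; apply/carrierP; exists Y.
have UF : U \subset F.
  apply/subsetP=> e eU; have := subsetUr S U; rewrite SU => /subsetP /(_ e eU).
  by case/setUP => [//|/set1P eY]; rewrite -eY eU in YU.
have SUF : (S :&: F) :|: U = F.
  apply/setP=> e; rewrite !inE; case eU: (e \in U); first by rewrite orbT (subsetP UF).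
  have := congr1 (fun A : {set {set T}} => e \in A) SU; rewrite /= !inE eU orbF => ->.
  by case: (e \in F); rewrite ?andbF.
have dis' : [disjoint carrier (S :&: F) & carrier U].
  exact: disjointWl (carrierS (subsetIl S F)) dis.
have [SF0|//] := ns _ _ SUF dis'.
have GU : G \subset U by rewrite -(setIidPr GF) -{1}SUF SF0 set0U subsetIl.
have yU : y \in carrier U by rewrite -cG in yY; apply: (subsetP (carrierS GU)).
by rewrite (disjointFr dis yS) in yU.
Qed.

Lemma unsplittableU1_sub S U : unsplittable (F :|: [set Y]) -> S :|: U = F ->
  [disjoint carrier S & carrier U] -> G \subset S -> U = set0.
Proof.
move=> ns SU dis GS.
have YS : Y \subset carrier S by rewrite -cG; apply: carrierS.
have SU' : (S :|: [set Y]) :|: U = F :|: [set Y] by rewrite -SU setUAC.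
have dis' : [disjoint carrier (S :|: [set Y]) & carrier U].
  by rewrite carrierU carrier_set1 (setUidPl YS).
case: (ns _ _ SU' dis') => // /setP /(_ Y); rewrite !inE eqxx orbT //.
Qed.

(* The new edge [Y] is already the carrier of the unsplittable [G], so any
   separation puts [G] and [Y] on the same side. *)
Lemma unsplittableU1 : unsplittable G ->
  unsplittable F <-> unsplittable (F :|: [set Y]).
Proof.
move=> nsG; split=> ns S U SU dis.
  have : Y \in S :|: U by rewrite SU !inE eqxx orbT.
  case/setUP => YX; first by right; apply: (unsplittableU1_side ns SU dis YX).
  by left; apply: (unsplittableU1_side ns _ _ YX); rewrite 1?setUC 1?disjoint_sym.
have GSU : (G :&: S) :|: (G :&: U) = G by rewrite -setIUr SU; apply/setIidPl.
have disG : [disjoint carrier (G :&: S) & carrier (G :&: U)].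
  by apply: disjointW dis; apply: carrierS; apply: subsetIr.
case: (nsG _ _ GSU disG) => G0.
  left; apply: (unsplittableU1_sub ns _ _ (S := U)); rewrite 1?setUC 1?disjoint_sym //.
  by rewrite -GSU G0 set0U subsetIr.
by right; apply: (unsplittableU1_sub ns SU dis); rewrite -GSU G0 setU0 subsetIr.
Qed.

End AddCarrierEdge.

Lemma enhances_conn_equiv H J : hypergraph H -> enhances J H -> conn_equiv H J.
Proof.
move=> hH [Y [Yn0 [[_ [cY cYY]] [YnH ->]]]] X.
have HY : restrict H Y :\ Y = restrict H Y.
  by apply/setP=> e; rewrite !inE; case: eqP => // ->; rewrite (negbTE YnH).
rewrite HY in cY cYY.
have hHX := hypergraph_restrict X hH.
have [YX|YnX] := boolP (Y \subset X); last first.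
  suff -> : restrict (H :|: [set Y]) X = restrict H X by [].
  by apply/setP=> e; rewrite !inE; case: eqP => [->|_]; rewrite ?(negbTE YnX) ?andbF ?orbF.
have -> : restrict (H :|: [set Y]) X = restrict H X :|: [set Y].
  by apply/setP=> e; rewrite !inE; case: eqP => [->|]; rewrite ?YX ?orbT ?orbF.
rewrite (connectedP hHX) (connectedP (hypergraphU1 hHX Yn0)).
apply: (unsplittableU1 Yn0 _ cYY).
  by rewrite -(restrict_restrict_sub H YX) restrict_sub.
exact/connectedP/cY/hypergraph_restrict.
Qed.

Lemma cognate_set0 H J : cognate H J -> (set0 \in H) = (set0 \in J).
Proof.
elim=> {H J} [H J [Y [Yn0 [_ [_ ->]]]]|//|H J _ ->//|H J G _ -> _ ->//].
by rewrite !inE eq_sym (negbTE Yn0) orbF.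
Qed.

Lemma cognate_conn_equiv H J : cognate H J -> hypergraph H -> conn_equiv H J.
Proof.
elim=> {H J} [H J HJ hH|H _ X //|H J HJ IH hJ|H J G HJ IHJ _ IHG hH].
- apply/conn_equiv_sym/(enhances_conn_equiv _ HJ); apply: hypergraphS hH _.
  by case: HJ => Y [_ [_ [_ ->]]]; apply: subsetUl.
- by apply/conn_equiv_sym/IH; rewrite /hypergraph (cognate_set0 HJ).
- apply: conn_equiv_trans (IHJ hH) (IHG _).
  by rewrite /hypergraph -(cognate_set0 HJ).
Qed.

(** * Saturation *)

Definition saturated H X := [/\ X != set0, X \subset carrier H & connected (restrict H X)].

Lemma edge_saturated H e : hypergraph H -> e \in H -> saturated H e.
Proof.
move=> hH eH; split; [exact: edge_neq0 hH eH|exact: sub_carrier|].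
exact: connected_restrict_edge.
Qed.

Lemma saturated_restrict_sub H A X : saturated (restrict H A) X -> saturated H X.
Proof.
case=> Xn0 XR cX; split=> //; first exact: subset_trans XR (carrierS (restrict_sub H A)).
by rewrite restrict_restrict_sub // in cX; apply: subset_trans XR (carrier_restrict_sub H A).
Qed.

Lemma saturated_restrict H A X : atomic H -> X \subset A ->
  saturated H X -> saturated (restrict H A) X.
Proof.
move=> aH XA [Xn0 XH cX]; split=> //; last by rewrite restrict_restrict_sub.
by rewrite carrier_restrict // subsetI XH.
Qed.

Lemma construction_saturated H K X : construction H K -> hypergraph H ->
  X \in K -> saturated H X.
Proof.
move=> cK; elim: cK X => {H K} [|H K x pos cH xH _ IH|H P Ks nc [hP _] two _ IH] X hH.
- by rewrite inE.
- case/setUP => [XK|/set1P ->]; first exact/saturated_restrict_sub/IH/XK/hypergraph_restrict.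
  by split; rewrite ?restrict_carrier // -card_gt0.
- case/bigcupP => B BP XB; have := IH B BP X (hypergraph_block hP hH BP) XB.
  by rewrite (blockE hP hH BP); apply: saturated_restrict_sub.
Qed.

Lemma atomic_hypergraph_ind (Pr : {set {set T}} -> Prop) :
  (forall H, hypergraph H -> atomic H ->
    (forall A, #|carrier H :&: A| < #|carrier H| -> Pr (restrict H A)) -> Pr H) ->
  forall H, hypergraph H -> atomic H -> Pr H.
Proof.
move=> step H; elim: {H}#|carrier H|.+1 {-2}H (ltnSn #|carrier H|) => // n IH H lt hH aH.
apply: step => // A ltA; apply: IH; rewrite ?carrier_restrict //.
- exact: leq_trans ltA lt.
- exact: hypergraph_restrict.
- exact: atomic_restrict.
Qed.

Lemma card_carrier_remove_lt H x : x \in carrier H ->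
  #|carrier H :&: (carrier H :\ x)| < #|carrier H|.
Proof.
move=> xH; apply/proper_card/properP; split; first exact: subsetIl.
by exists x; rewrite // !inE eqxx andbF.
Qed.

Lemma card_carrier_block_lt H P B : hypergraph H -> ~ connected H ->
  finest_hpartition H P -> B \in P -> #|carrier H :&: carrier B| < #|carrier H|.
Proof.
move=> hH nc fP BP; have [hP _] := fP.
have [B' B'P neB'] : exists2 B', B' \in P & B' != B.
  have := finest_two_blocks hH nc fP; rewrite (cardsD1 B P) BP ltnS card_gt0.
  by case/set0Pn => B'; rewrite !inE => /andP [ne B'P]; exists B'.
rewrite (setIidPr (carrierS (block_sub hP BP))).
by apply: (carrier_block_lt hP BP B'P); rewrite eq_sym.
Qed.

Lemma construction_exists H : hypergraph H -> atomic H -> exists K, construction H K.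
Proof.
move: H; apply: atomic_hypergraph_ind => H hH aH IH.
have [C0|/set0Pn [x xH]] := eqVneq (carrier H) set0.
  by exists set0; move/eqP: C0; rewrite carrier_eq0 // => /eqP ->; apply: constr_empty.
have [cH|nc] := classic (connected H).
  have [K cK] := IH _ (card_carrier_remove_lt xH).
  exists (K :|: [set carrier H]); apply: constr_conn cK => //.
  by rewrite card_gt0; apply/set0Pn; exists x.
have [P fP] := finest_hpartition_exists hH; have [hP _] := fP.
have [Ks cKs] : exists Ks, forall B, B \in P -> construction B (Ks B).
  apply: choice_in set0 _ => B BP; rewrite (blockE hP hH BP).
  exact: IH (card_carrier_block_lt hH nc fP BP).
by exists (\bigcup_(B in P) Ks B); apply: constr_disc (finest_two_blocks hH nc fP) cKs.
Qed.

Lemma saturated_in_construction H X : hypergraph H -> atomic H ->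
  saturated H X -> exists2 K, construction H K & X \in K.
Proof.
move=> hH aH; move: H hH aH X; apply: atomic_hypergraph_ind => H hH aH IH X satX.
have [Xn0 XH cX] := satX; have /set0Pn [x0 x0X] := Xn0.
have pos : 0 < #|carrier H| by rewrite card_gt0; apply/set0Pn; exists x0; apply: (subsetP XH).
have [cH|nc] := classic (connected H).
  have [->|neX] := eqVneq X (carrier H).
    have x0H := subsetP XH x0 x0X.
    have [K cK] := construction_exists (hypergraph_restrict (carrier H :\ x0) hH)
      (atomic_restrict aH).
    by exists (K :|: [set carrier H]); [apply: constr_conn pos cH x0H cK|rewrite !inE eqxx orbT].
  have /properP [_ [x xH xnX]] : X \proper carrier H by rewrite properEneq neX.
  have [K cK XK] := IH _ (card_carrier_remove_lt xH) X
    (saturated_restrict aH (introT subsetD1P (conj XH xnX)) satX).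
  by exists (K :|: [set carrier H]); [apply: constr_conn pos cH xH cK|rewrite inE XK].
have [P fP] := finest_hpartition_exists hH; have [hP _] := fP.
have [B0 B0P XB0] := connected_in_block hH aH hP XH Xn0 cX.
have [K0 cK0 XK0] : exists2 K, construction B0 K & X \in K.
  rewrite (blockE hP hH B0P); apply: IH (card_carrier_block_lt hH nc fP B0P) _ _.
  exact: saturated_restrict.
have [Ks cKs] : exists Ks, forall B, B \in P -> construction B (Ks B).
  apply: choice_in set0 _ => B BP.
  exact: construction_exists (hypergraph_block hP hH BP) (atomic_block hP aH BP).
exists (\bigcup_(B in P) (if B == B0 then K0 else Ks B)).
  apply: constr_disc (finest_two_blocks hH nc fP) _ => // B BP.
  by case: eqP => [->|_]; [|apply: cKs].
by apply/bigcupP; exists B0; rewrite ?eqxx.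
Qed.

Lemma saturatedP H X : hypergraph H -> atomic H ->
  saturated H X <-> exists2 K, construction H K & X \in K.
Proof.
move=> hH aH; split; first exact: saturated_in_construction.
by case=> K cK XK; apply: construction_saturated cK hH XK.
Qed.

Definition saturation H : {set {set T}} :=
  [set X | if excluded_middle_informative (saturated H X) then true else false].

Lemma saturationP H X : reflect (saturated H X) (X \in saturation H).
Proof. by rewrite inE; case: excluded_middle_informative => ?; constructor. Qed.

Lemma saturation_construction H J : hypergraph H -> hypergraph J -> atomic H -> atomic J ->
  (forall K, construction H K <-> construction J K) -> saturation H = saturation J.
Proof.
move=> hH hJ aH aJ eqK; apply/setP=> X.
apply/saturationP/saturationP; rewrite (saturatedP _ hH aH) (saturatedP _ hJ aJ).
  by case=> K /eqK; exists K.
by case=> K /eqK; exists K.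
Qed.

Lemma enhances_saturated H G Y : hypergraph H -> atomic H -> H \subset G ->
  conn_equiv H G -> saturated H Y -> Y \notin G -> enhances (G :|: [set Y]) G.
Proof.
move=> hH aH HG E [Yn0 YH cY] YnG; exists Y; split=> //; split=> //.
have GY : restrict G Y :\ Y = restrict G Y.
  by apply/setP=> e; rewrite !inE; case: eqP => // ->; rewrite (negbTE YnG).
split; first exact: subset_trans YH (carrierS HG).
rewrite GY; split; first exact/E.
apply/eqP; rewrite eqEsubset carrier_restrict_sub /=.
rewrite -{1}(carrier_restrict_subset aH YH); apply/carrierS/subsetP => e.
by rewrite !inE => /andP [/(subsetP HG) ->].
Qed.

Lemma cognate_saturation H : hypergraph H -> atomic H -> cognate H (saturation H).
Proof.
move=> hH aH.
suff grow n G : #|saturation H :\: G| < n -> H \subset G -> G \subset saturation H ->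
    cognate H G -> cognate H (saturation H).
  apply: (grow _ H (ltnSn _) (subxx _)); last exact: rst_refl.
  by apply/subsetP => e eH; apply/saturationP/edge_saturated.
elim: n G => [//|n IH] G lt HG GS cHG.
have [/eqP|/set0Pn [Y /setDP [/saturationP satY YnG]]] := eqVneq (saturation H :\: G) set0.
  by rewrite setD_eq0 => SG; rewrite (_ : saturation H = G) //; apply/eqP; rewrite eqEsubset SG.
have enh := enhances_saturated hH aH HG (cognate_conn_equiv cHG hH) satY YnG.
apply: (IH (G :|: [set Y])).
- rewrite ltnS in lt; apply: leq_trans lt; apply/proper_card/properP; split.
    exact/setDS/subsetUl.
  by exists Y; rewrite in_setD ?in_setU ?in_set1 ?eqxx ?orbT // YnG; apply/saturationP.
- exact: subset_trans HG (subsetUl _ _).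
- by rewrite subUset GS sub1set; apply/saturationP.
- by apply: rst_trans cHG _; apply: rst_sym; apply: rst_step.
Qed.

End Hypergraphs.

Unset Implicit Arguments.

Theorem proposition4p9 (T : finType) (H J : {set {set T}}) :
  hypergraph H -> hypergraph J -> atomic H -> atomic J ->
  carrier H = carrier J ->
  (cognate H J <-> (forall K, construction H K <-> construction J K)).
Proof.
move=> hH hJ aH aJ CHJ; split=> [cHJ K|eqK].
  have E := cognate_conn_equiv cHJ hH.
  split=> cK; first exact: construction_transfer cK hH hJ aH aJ CHJ E.
  exact: construction_transfer cK hJ hH aJ aH (esym CHJ) (conn_equiv_sym E).
apply: rst_trans (cognate_saturation hH aH) _.
rewrite (saturation_construction hH hJ aH aJ eqK).
exact/rst_sym/cognate_saturation.
Qed.
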